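(* Let $\mathcal{V}$ (respondents) and $\mathcal{X}$ (queries) be finite sets, let $k\ge 1$ and $T\ge 1$ be integers with $|\mathcal{X}|\ge T$, and let $f:2^{\mathcal{V}\times\mathcal{X}}\to\mathbb{R}_{\ge 0}$ satisfy $f(\emptyset)=0$ and be monotone and submodular: for all $W_1\subseteq W_2\subseteq \mathcal{V}\times\mathcal{X}$ and all $W\subseteq \mathcal{V}\times\mathcal{X}$, $f(W_2)\ge f(W_1)$ and $\Delta(W\mid W_1)\ge \Delta(W\mid W_2)$, where $\Delta(A\mid S)=f(S\cup A)-f(S)$. Define the joint greedy sequence $(R_1,x_1),\dots,(R_T,x_T)$ by $S_0=\emptyset$ and, for $t=1,\dots,T$, $$(R_t,x_t)\in\arg\max_{R\subseteq\mathcal{V},\,|R|\le k,\; x\in\mathcal{X}\setminus\{x_1,\dots,x_{t-1}\}}\Delta\big(R\times\{x\}\mid S_{t-1}\big),\qquad S_t=S_{t-1}\cup (R_t\times\{x_t\}),$$ (ties broken arbitrarily). Then for every sequence $(R_1^*,x_1^* ),\dots,(R_T^*,x_T^* )$ with $R_t^*\subseteq\mathcal{V}$, $|R_t^*|\le k$, and pairwise distinct queries $x_1^*,\dots,x_T^*\in\mathcal{X}$, setting $S_T^*=\bigcup_{t=1}^T R_t^*\times\{x_t^*\}$, we have $$f(S_T^* )\le \frac{2}{1-e^{-2}}\, f(S_T).$$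
   Context: A pair $(R,x)$ with $R\subseteq\mathcal{V}$, $x\in\mathcal{X}$ (a subset of respondents asked query $x$) is identified with the set $R\times\{x\}\subseteq\mathcal{V}\times\mathcal{X}$; a history of selected pairs is the union of these sets. $f$ is a utility function measuring information gained about a group's latent properties (e.g. expected information gain). *)

From HB Require Import structures.
From mathcomp Require Import all_boot all_order all_algebra.
From mathcomp Require Import all_classical all_reals all_analysis.
Set Implicit Arguments. Unset Strict Implicit. Unset Printing Implicit Defensive.
Import Order.TTheory GRing.Theory Num.Theory.
Local Open Scope ring_scope.

Definition marg (R : realType) (V X : finType) (f : {set V * X} -> R)
  (A S : {set V * X}) : R := f (S :|: A) - f S.

Definition pairset (V X : finType) (Rr : {set V}) (x : X) : {set V * X} :=
  finset.setX Rr [set x].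

(* History after the first t selections (indices 0..t-1). *)
Definition hist (V X : finType) (Rs : nat -> {set V}) (xs : nat -> X) (t : nat)
  : {set V * X} := \bigcup_(i < t) pairset (Rs i) (xs i).

From HB Require Import structures.
From mathcomp Require Import all_boot all_order all_algebra.
From mathcomp Require Import all_classical all_reals all_analysis.
Set Implicit Arguments. Unset Strict Implicit. Unset Printing Implicit Defensive.
Import Order.TTheory GRing.Theory Num.Theory.
Local Open Scope ring_scope.

(* In fact f(S*_T) <= 2 f(S_T), and 2 <= 2 / (1 - e^-2).  Telescoping writes
   f(S_T) as the sum of the greedy gains d_j, and submodularity bounds
   f(S*_T) - f(S_T) by the sum of the gains e_i of the optimal pairs on top of
   S_T.  Match each optimal pair i whose query the greedy picked, at step q i,
   with that step: all earlier greedy queries differ from x*_i, so the pair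
   (R*_i, x*_i) was a candidate at step q i and e_i <= d_(q i).  Every other
   optimal pair was a candidate at every step, so it is dominated by any of the
   unmatched greedy steps, of which there are equally many.  Hence
   sum_i e_i <= sum_j d_j. *)

Section History.
Variables (V X : finType) (Rs : nat -> {set V}) (xs : nat -> X).

Lemma hist0 : hist Rs xs 0 = finset.set0.
Proof. by rewrite /hist big_ord0. Qed.

Lemma histS t : hist Rs xs t.+1 = hist Rs xs t :|: pairset (Rs t) (xs t).
Proof. by rewrite /hist big_ord_recr. Qed.

Lemma subset_hist t u : (t <= u)%N -> hist Rs xs t \subset hist Rs xs u.
Proof.
elim: u => [|u IH]; first by rewrite leqn0 => /eqP ->.
rewrite leq_eqVlt => /orP [/eqP -> //|]; rewrite ltnS => /IH sub_tu.
by rewrite histS (fintype.subset_trans sub_tu) // finset.subsetUl.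
Qed.

End History.

Section SumComparison.
Variable R : numDomainType.

Lemma ler_sum_card (I J : finType) (P : {set I}) (Q : {set J})
    (e : I -> R) (d : J -> R) :
  #|P| = #|Q| -> (forall i j, i \in P -> j \in Q -> e i <= d j) ->
  \sum_(i in P) e i <= \sum_(j in Q) d j.
Proof.
move=> eq_card le_ed; case cardQ: #|Q| => [|n].
  move: eq_card; rewrite cardQ => /cards0_eq ->; move/cards0_eq: cardQ => ->.
  by rewrite !big_set0.
have : \sum_(i in P) \sum_(j in Q) e i <= \sum_(i in P) \sum_(j in Q) d j.
  by apply: ler_sum => i iP; apply: ler_sum => j jQ; exact: le_ed.
rewrite (eq_bigr (fun i => e i *+ #|Q|)); last by move=> i _; rewrite sumr_const.
by rewrite sumrMnl sumr_const eq_card cardQ ler_pMn2r.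
Qed.

Lemma ler_sum_partial_injection (I : finType) (A : {set I}) (q : I -> I)
    (e d : I -> R) :
  {in A &, injective q} ->
  (forall i, i \in A -> e i <= d (q i)) ->
  (forall i j, i \notin A -> j \notin q @: A -> e i <= d j) ->
  \sum_i e i <= \sum_j d j.
Proof.
move=> q_inj le_matched le_unmatched.
rewrite (bigID (mem A)) [X in _ <= X](bigID (mem (q @: A))) /=.
apply: lerD.
  by rewrite big_imset //=; apply: ler_sum.
rewrite (eq_bigl (mem (~: A))) => [|i]; last by rewrite /= finset.in_setC.
rewrite [X in _ <= X](eq_bigl (mem (~: (q @: A)))) => [|j]; last by rewrite /= finset.in_setC.
apply: ler_sum_card => [|i j]; last by rewrite !finset.in_setC; exact: le_unmatched.
by apply/eqP; rewrite -(eqn_add2l #|A|) cardsC -{1}(card_in_imset q_inj) cardsC.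
Qed.

End SumComparison.

Section SetFunction.
Variables (R : realType) (V X : finType) (f : {set V * X} -> R).

Lemma f_hist_telescope (Rs : nat -> {set V}) (xs : nat -> X) n :
  f finset.set0 = 0 ->
  f (hist Rs xs n) = \sum_(j < n) marg f (pairset (Rs j) (xs j)) (hist Rs xs j).
Proof.
move=> f0; elim: n => [|n IH]; first by rewrite hist0 f0 big_ord0.
by rewrite big_ord_recr /= -IH /marg histS addrC subrK.
Qed.

Hypothesis f_sub : forall W1 W2 W : {set V * X}, W1 \subset W2 ->
  marg f W W2 <= marg f W W1.

Lemma marg_hist_le_sum (G : {set V * X}) (Rs : nat -> {set V}) (xs : nat -> X) n :
  f (G :|: hist Rs xs n) - f G
    <= \sum_(i < n) marg f (pairset (Rs i) (xs i)) G.
Proof.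
elim: n => [|n IH]; first by rewrite hist0 finset.setU0 subrr big_ord0.
rewrite big_ord_recr /= histS finset.setUA.
have := @f_sub _ _ (pairset (Rs n) (xs n)) (finset.subsetUl G (hist Rs xs n)).
rewrite /marg => le_n.
rewrite -(subrK (f (G :|: hist Rs xs n)) (f _)) -addrA [X in _ <= X]addrC.
exact: lerD.
Qed.

Variables (T : nat) (Rg Ro : nat -> {set V}) (xg xo : nat -> X) (k : nat).
Hypothesis greedy_new : forall t, (t < T)%N -> forall i, (i < t)%N -> xg t != xg i.
Hypothesis greedy_max : forall t, (t < T)%N ->
  forall (Rr : {set V}) (x : X), (#|Rr| <= k)%N ->
    (forall i, (i < t)%N -> x != xg i) ->
    marg f (pairset Rr x) (hist Rg xg t)
      <= marg f (pairset (Rg t) (xg t)) (hist Rg xg t).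
Hypothesis opt_card : forall t, (t < T)%N -> (#|Ro t| <= k)%N.
Hypothesis opt_distinct :
  forall i j, (i < T)%N -> (j < T)%N -> xo i = xo j -> i = j.

Let greedy_gain j := marg f (pairset (Rg j) (xg j)) (hist Rg xg j).
Let opt_gain i := marg f (pairset (Ro i) (xo i)) (hist Rg xg T).

Lemma opt_gain_le_greedy_gain (i j : 'I_T) :
  (forall j', (j' < j)%N -> xo i != xg j') -> opt_gain i <= greedy_gain j.
Proof.
move=> fresh; rewrite /opt_gain /greedy_gain.
apply: le_trans _ (greedy_max (ltn_ord j) (opt_card (ltn_ord i)) fresh).
exact/f_sub/subset_hist/ltnW.
Qed.

Lemma sum_opt_gain_le : \sum_(i < T) opt_gain i <= \sum_(j < T) greedy_gain j.
Proof.
pose A := [set i : 'I_T | [exists j : 'I_T, xg j == xo i]].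
pose q (i : 'I_T) := odflt i [pick j : 'I_T | xg j == xo i].
have qP i : i \in A -> xg (q i) = xo i.
  rewrite inE => /existsP [j /eqP xj]; rewrite /q.
  by case: pickP => [j' /eqP //|/(_ j)]; rewrite xj eqxx.
apply: (@ler_sum_partial_injection _ _ A q).
- move=> i1 i2 i1A i2A eq_q; apply/val_inj/(opt_distinct (ltn_ord i1) (ltn_ord i2)).
  by rewrite -(qP _ i1A) -(qP _ i2A) eq_q.
- move=> i iA; apply: opt_gain_le_greedy_gain => j' lt_j'.
  by rewrite -(qP _ iA) greedy_new.
- move=> i j; rewrite inE => /existsP unused _.
  apply: opt_gain_le_greedy_gain => j' lt_j'; apply/eqP => eq_x; apply: unused.
  by exists (Ordinal (ltn_trans lt_j' (ltn_ord j))); rewrite /= eq_x.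
Qed.

Lemma opt_le_2greedy :
  f finset.set0 = 0 -> (forall W1 W2 : {set V * X}, W1 \subset W2 -> f W1 <= f W2) ->
  f (hist Ro xo T) <= 2 * f (hist Rg xg T).
Proof.
move=> f0 f_mono; set G := hist Rg xg T.
apply: le_trans (f_mono _ (G :|: hist Ro xo T) (finset.subsetUr _ _)) _.
have := marg_hist_le_sum G Ro xo T; rewrite lerBlDl => /le_trans; apply.
by rewrite mulr2n mulrDl mul1r lerD2l {2}/G f_hist_telescope // sum_opt_gain_le.
Qed.

End SetFunction.

Lemma two_le_greedy_constant (R : realType) : 2 <= 2 / (1 - expR (-2)) :> R.
Proof.
have pos : 0 < 1 - expR (-2 : R) by rewrite subr_gt0 expR_lt1 oppr_lt0.
by rewrite ler_pdivlMr // ler_piMr // gerBl expR_ge0.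
Qed.

Theorem theorem1 (R : realType) (V X : finType) (k T : nat)
  (f : {set V * X} -> R)
  (hk : (1 <= k)%N) (hT : (1 <= T)%N) (hX : (T <= #|X|)%N)
  (f_ge0 : forall W, 0 <= f W)
  (f0 : f finset.set0 = 0)
  (f_mono : forall W1 W2 : {set V * X}, W1 \subset W2 -> f W1 <= f W2)
  (f_sub : forall W1 W2 W : {set V * X}, W1 \subset W2 ->
              marg f W W2 <= marg f W W1)
  (Rg : nat -> {set V}) (xg : nat -> X)
  (greedy_card : forall t, (t < T)%N -> (#|Rg t| <= k)%N)
  (greedy_new : forall t, (t < T)%N -> forall i, (i < t)%N -> xg t != xg i)
  (greedy_max : forall t, (t < T)%N ->
     forall (Rr : {set V}) (x : X), (#|Rr| <= k)%N ->
       (forall i, (i < t)%N -> x != xg i) ->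
       marg f (pairset Rr x) (hist Rg xg t)
         <= marg f (pairset (Rg t) (xg t)) (hist Rg xg t))
  (Ro : nat -> {set V}) (xo : nat -> X)
  (opt_card : forall t, (t < T)%N -> (#|Ro t| <= k)%N)
  (opt_distinct : forall i j, (i < T)%N -> (j < T)%N -> xo i = xo j -> i = j) :
  f (hist Ro xo T) <= 2 / (1 - expR (-2)) * f (hist Rg xg T).
Proof.
apply: le_trans (opt_le_2greedy f_sub greedy_new greedy_max opt_card opt_distinct
  f0 f_mono) _.
apply: ler_wpM2r; [exact: f_ge0 | exact: two_le_greedy_constant].
Qed.
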